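(* Let $(u_0,v_0)=(e_4+e_{13},\,e_6+e_{15})\in\mathcal Z(\mathbb S)$ and let $g$ be the left-invariant metric on $G_2$ defined on $\mathfrak g_2$ by $g(X,Y)=\langle X\cdot(u_0,v_0),\,Y\cdot(u_0,v_0)\rangle_{\mathbb R^{32}}$ (i.e. the pullback of the induced metric of $\mathcal Z(\mathbb S)\subset\mathbb R^{32}$ under the diffeomorphism $h\mapsto h\cdot(u_0,v_0)$). Then $(G_2,g)$ (equivalently $\mathcal Z(\mathbb S)$) has positive Ricci curvature, and its Ricci tensor, as a left-invariant symmetric bilinear form on $\mathfrak g_2$, is $$\mathrm{Ric}=\frac52\sum_{i=0}^2 X^i\otimes X^i+\frac{29}{54}\sum_{i=3}^5 X^i\otimes X^i+\frac56\sum_{i=6}^{13}X^i\otimes X^i .$$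
   Context: Cayley–Dickson algebras: $\mathbb A_0=\mathbb R$, $a^*=a$; $\mathbb A_n=\mathbb A_{n-1}\times\mathbb A_{n-1}$ with $(a,b)(c,d)=(ac-d^*b,\ da+bc^* )$, $(a,b)^*=(a^*,-b)$; canonical basis $e_i=(e_i,0)$, $e_{2^{n-1}+i}=(0,e_i)$ for $0\le i<2^{n-1}$. $\mathbb O=\mathbb A_3$, $\mathbb S=\mathbb A_4\cong\mathbb R^{16}$ (sedenions) with standard inner product. $\mathcal Z(\mathbb S)=\{(u,v)\in\mathbb S\times\mathbb S:\|u\|=\|v\|=\sqrt2,\ uv=0\}$ with metric induced from $\mathbb R^{32}$. $G_2=\mathrm{Aut}(\mathbb O)\subset\mathrm{SO}(8)$ (matrices w.r.t. $e_0,\dots,e_7$), acting on $\mathbb S=\mathbb O\times\mathbb O$ by $h(a,b)=(ha,hb)$ and diagonally on $\mathbb S\times\mathbb S$; this action is simply transitive on $\mathcal Z(\mathbb S)$. Its Lie algebra $\mathfrak g_2\subset\mathfrak{so}(8)$ acts likewise: $X\cdot(a,b)=(Xa,Xb)$. For $0\le i<j\le7$ let $E_{ij}\in\mathfrak{so}(8)$ have $(E_{ij})_{ij}=-1$, $(E_{ij})_{ji}=1$ and all other entries $0$ (rows/columns indexed $0,\dots,7$). The basis $X_0,\dots,X_{13}$ of $\mathfrak g_2$ is: $X_0=\tfrac12(E_{45}+E_{67})$, $X_1=\tfrac12(E_{46}-E_{57})$, $X_2=\tfrac12(E_{47}+E_{56})$, $X_3=-\tfrac{\sqrt3}6(2E_{23}-E_{45}+E_{67})$,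 $X_4=\tfrac{\sqrt3}6(2E_{13}+E_{46}+E_{57})$, $X_5=-\tfrac{\sqrt3}6(2E_{12}-E_{47}+E_{56})$, $X_6=-\tfrac12(E_{17}-E_{24})$, $X_7=\tfrac12(E_{16}+E_{25})$, $X_8=-\tfrac12(E_{15}-E_{26})$, $X_9=\tfrac12(E_{14}+E_{27})$, $X_{10}=\tfrac{\sqrt3}6(E_{16}-E_{25}+2E_{34})$, $X_{11}=\tfrac{\sqrt3}6(E_{17}+E_{24}+2E_{35})$, $X_{12}=-\tfrac{\sqrt3}6(E_{14}-E_{27}-2E_{36})$, $X_{13}=-\tfrac{\sqrt3}6(E_{15}+E_{26}-2E_{37})$; it is orthonormal for $-\mathrm{tr}(XY)$. $X^0,\dots,X^{13}$ denotes the dual basis. *)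

(* Left-invariant Riemannian geometry on G2 done algebraically
   on its Lie algebra g2 (spanned by the 14 given 8x8 matrices). *)
From HB Require Import structures.
From mathcomp Require Import all_boot all_order all_algebra.
Set Implicit Arguments. Unset Strict Implicit. Unset Printing Implicit Defensive.
Import Order.TTheory GRing.Theory Num.Theory.
Local Open Scope ring_scope.

Section G2.
Variable R : rcfType.

Definition Emx (i j : nat) : 'M[R]_8 :=
  \matrix_(r, c) (if (r == i :> nat) && (c == j :> nat) then -1
                  else if (r == j :> nat) && (c == i :> nat) then 1 else 0).

Definition s3 : R := Num.sqrt 3.

Definition Xn (n : nat) : 'M[R]_8 :=
  match n with
  | 0 => 2^-1 *: (Emx 4 5 + Emx 6 7)
  | 1 => 2^-1 *: (Emx 4 6 - Emx 5 7)
  | 2 => 2^-1 *: (Emx 4 7 + Emx 5 6)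
  | 3 => - (s3 / 6) *: (2 *: Emx 2 3 - Emx 4 5 + Emx 6 7)
  | 4 => (s3 / 6) *: (2 *: Emx 1 3 + Emx 4 6 + Emx 5 7)
  | 5 => - (s3 / 6) *: (2 *: Emx 1 2 - Emx 4 7 + Emx 5 6)
  | 6 => - 2^-1 *: (Emx 1 7 - Emx 2 4)
  | 7 => 2^-1 *: (Emx 1 6 + Emx 2 5)
  | 8 => - 2^-1 *: (Emx 1 5 - Emx 2 6)
  | 9 => 2^-1 *: (Emx 1 4 + Emx 2 7)
  | 10 => (s3 / 6) *: (Emx 1 6 - Emx 2 5 + 2 *: Emx 3 4)
  | 11 => (s3 / 6) *: (Emx 1 7 + Emx 2 4 + 2 *: Emx 3 5)
  | 12 => - (s3 / 6) *: (Emx 1 4 - Emx 2 7 - 2 *: Emx 3 6)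
  | _ => - (s3 / 6) *: (Emx 1 5 + Emx 2 6 - 2 *: Emx 3 7)
  end.

Definition Xg (i : 'I_14) : 'M[R]_8 := Xn i.

(* sedenions S = O x O = R^16 as column vectors; canonical basis e_k *)
Definition sed_e (k : nat) : 'cV[R]_16 := \col_(r < 16) (if r == k :> nat then 1 else 0).

Definition actS (A : 'M[R]_8) (s : 'cV[R]_(8 + 8)) : 'cV[R]_(8 + 8) :=
  col_mx (A *m usubmx s) (A *m dsubmx s).

Definition ip (n : nat) (x y : 'cV[R]_n) : R := \sum_(r < n) x r 0 * y r 0.

Definition u0 : 'cV[R]_16 := sed_e 4 + sed_e 13.
Definition v0 : 'cV[R]_16 := sed_e 6 + sed_e 15.

(* g(A,B) = < A.(u0,v0), B.(u0,v0) >_{R^32}  (diagonal action on S x S) *)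
Definition gm (A B : 'M[R]_8) : R :=
  ip (actS A u0) (actS B u0) + ip (actS A v0) (actS B v0).

Definition Gram : 'M[R]_14 := \matrix_(i, j) gm (Xg i) (Xg j).
Definition Gram_inv : 'M[R]_14 := invmx Gram.

Definition br (A B : 'M[R]_8) : 'M[R]_8 := A *m B - B *m A.

(* coordinates in the basis X_k (g-orthogonal projection onto g2) *)
Definition coord (A : 'M[R]_8) (k : 'I_14) : R :=
  \sum_(l < 14) Gram_inv k l * gm A (Xg l).

Definition cst (i j k : 'I_14) : R := coord (br (Xg i) (Xg j)) k.

Definition koszul (i j l : 'I_14) : R :=
  2^-1 * (gm (br (Xg i) (Xg j)) (Xg l) - gm (br (Xg j) (Xg l)) (Xg i)
          + gm (br (Xg l) (Xg i)) (Xg j)).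

(* Levi-Civita: nabla_{X_i} X_j = sum_k Gamma i j k X_k *)
Definition Gamma (i j k : 'I_14) : R := \sum_(l < 14) Gram_inv k l * koszul i j l.

(* R(X_a,X_b) X_c = nabla_a nabla_b X_c - nabla_b nabla_a X_c - nabla_[X_a,X_b] X_c
   = sum_m Rcoef a b c m X_m *)
Definition Rcoef (a b c m : 'I_14) : R :=
  \sum_(k < 14) (Gamma b c k * Gamma a k m - Gamma a c k * Gamma b k m)
  - \sum_(k < 14) cst a b k * Gamma k c m.

Definition Ric (b c : 'I_14) : R := \sum_(a < 14) Rcoef a b c a.
Definition RicM : 'M[R]_14 := \matrix_(b, c) Ric b c.

Definition ric_val (i : 'I_14) : R :=
  if (i < 3)%N then 5 / 2 else if (i < 6)%N then 29 / 54 else 5 / 6.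

End G2.

(* In the basis X_0, ..., X_13 the metric g is diagonal, with g(X_i, X_i) equal
   to 1, 1/3, 1/2 on the three blocks, so the Christoffel symbols (Koszul
   formula), the curvature and the Ricci tensor are finite rational expressions
   in the entries of the X_i, which lie in Q(sqrt 3).  These expressions are
   evaluated exactly on pairs of rationals (a, b) ~ a + b sqrt 3 by vm_compute,
   and the outcome is transported to an arbitrary real closed field along the
   ring morphism (a, b) |-> a + b Num.sqrt 3.  The Ricci matrix turns out to be
   diagonal with positive entries, hence positive definite. *)

From Stdlib Require Import ZArith QArith_base Qreduction.
From Pilot Require Import Defs.
From HB Require Import structures.
From mathcomp Require Import all_boot all_order all_algebra.
From mathcomp Require Import ssrZ ring.
Import ssrZ.Instances Order.TTheory GRing.Theory Num.Theory.
Set Implicit Arguments. Unset Strict Implicit. Unset Printing Implicit Defensive.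
Local Open Scope ring_scope.

Section RationalEmbedding.
Variable R : numFieldType.

Definition Z2R (z : Z) : R := (int_of_Z z)%:~R.

Lemma Z2R_add x y : Z2R (Z.add x y) = Z2R x + Z2R y.
Proof. by rewrite /Z2R -[Z.add x y]/(x + y)%R rmorphD intrD. Qed.

Lemma Z2R_mul x y : Z2R (Z.mul x y) = Z2R x * Z2R y.
Proof. by rewrite /Z2R -[Z.mul x y]/(x * y)%R rmorphM intrM. Qed.

Lemma Z2R_opp x : Z2R (Z.opp x) = - Z2R x.
Proof. by rewrite /Z2R -[Z.opp x]/(- x)%R rmorphN intrN. Qed.

Lemma Z2R_pos_mul p q : Z2R (Zpos (p * q)) = Z2R (Zpos p) * Z2R (Zpos q).
Proof. exact: (Z2R_mul (Zpos p) (Zpos q)). Qed.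

Lemma Z2R_pos_neq0 p : Z2R (Zpos p) != 0.
Proof. by rewrite /Z2R /= intr_eq0 eqz_nat -lt0n; apply/ssrnat.ltP/Pos2Nat.is_pos. Qed.

Definition Q2R (q : Q) : R := Z2R (Qnum q) / Z2R (Zpos (Qden q)).

Lemma Q2R_int z : Q2R (Qmake z 1) = Z2R z.
Proof. exact: divr1. Qed.

Lemma Q2R_Qeq p q : Qeq p q -> Q2R p = Q2R q.
Proof.
move=> /(congr1 Z2R); rewrite !Z2R_mul => epq.
have dp := Z2R_pos_neq0 (Qden p); have dq := Z2R_pos_neq0 (Qden q).
by apply/eqP; rewrite /Q2R eqr_div // epq.
Qed.

Lemma Q2R_red q : Q2R (Qred q) = Q2R q.
Proof. exact/Q2R_Qeq/Qred_correct. Qed.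

Lemma Q2R_plus p q : Q2R (Qplus p q) = Q2R p + Q2R q.
Proof.
have dp := Z2R_pos_neq0 (Qden p); have dq := Z2R_pos_neq0 (Qden q).
by rewrite /Q2R /= Z2R_pos_mul Z2R_add !Z2R_mul; field; apply/andP.
Qed.

Lemma Q2R_mult p q : Q2R (Qmult p q) = Q2R p * Q2R q.
Proof. by rewrite /Q2R /= Z2R_pos_mul Z2R_mul invfM mulrACA. Qed.

Lemma Q2R_opp q : Q2R (Qopp q) = - Q2R q.
Proof. by rewrite /Q2R /= Z2R_opp mulNr. Qed.

End RationalEmbedding.

Section QSqrt3.
Local Open Scope Q_scope.

(* The pair (a, b) stands for a + b sqrt 3. *)
Definition Qsqrt3 : Type := (Q * Q)%type.

Definition qs_of_Q (q : Q) : Qsqrt3 := (q, 0).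
Definition qs_zero : Qsqrt3 := qs_of_Q 0.
Definition qs_one : Qsqrt3 := qs_of_Q 1.
Definition qs_two : Qsqrt3 := qs_of_Q 2.
Definition qs_half : Qsqrt3 := qs_of_Q (1 # 2).
Definition qs_sqrt3_div6 : Qsqrt3 := (0, 1 # 6).

Definition qs_add (x y : Qsqrt3) : Qsqrt3 := (Qred (x.1 + y.1), Qred (x.2 + y.2)).
Definition qs_opp (x : Qsqrt3) : Qsqrt3 := (- x.1, - x.2).
Definition qs_sub (x y : Qsqrt3) : Qsqrt3 := qs_add x (qs_opp y).
Definition qs_mul (x y : Qsqrt3) : Qsqrt3 :=
  (Qred (x.1 * y.1 + 3 * (x.2 * y.2)), Qred (x.1 * y.2 + x.2 * y.1)).
Definition qs_eqb (x y : Qsqrt3) : bool := Qeq_bool x.1 y.1 && Qeq_bool x.2 y.2.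

Fixpoint qs_sum (n : nat) (f : nat -> Qsqrt3) : Qsqrt3 :=
  if n is m.+1 then qs_add (qs_sum m f) (f m) else qs_zero.

End QSqrt3.

Definition qmx : Type := nat -> nat -> Qsqrt3.
Definition qtensor : Type := nat -> nat -> nat -> Qsqrt3.

Definition qmx_add (a b : qmx) : qmx := fun r c => qs_add (a r c) (b r c).
Definition qmx_sub (a b : qmx) : qmx := fun r c => qs_sub (a r c) (b r c).
Definition qmx_scale (x : Qsqrt3) (a : qmx) : qmx := fun r c => qs_mul x (a r c).
Definition qmx_mul (n : nat) (a b : qmx) : qmx :=
  fun r c => qs_sum n (fun k => qs_mul (a r k) (b k c)).
Definition qmx_comm (n : nat) (a b : qmx) : qmx := qmx_sub (qmx_mul n a b) (qmx_mul n b a).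

(* Under vm_compute and in the kernel, a let-bound memo x0 n f evaluates each
   f i at most once. *)
Definition memo (T : Type) (x0 : T) (n : nat) (f : nat -> T) : nat -> T :=
  let t := mkseq f n in nth x0 t.

Lemma memoE T x0 n f i : (i < n)%N -> @memo T x0 n f i = f i.
Proof. exact: nth_mkseq. Qed.

Definition qmx_memo (n : nat) (a : qmx) : qmx :=
  memo (fun _ => qs_zero) n (fun r => memo qs_zero n (a r)).

Definition qmx_table (n : nat) (f : nat -> qmx) : nat -> qmx :=
  memo (fun _ _ => qs_zero) n (fun i => qmx_memo n (f i)).

Lemma qmx_tableE n f i j k : (i < n)%N -> (j < n)%N -> (k < n)%N ->
  qmx_table n f i j k = f i j k.
Proof. by move=> ? ? ?; rewrite /qmx_table /qmx_memo !memoE. Qed.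

Section Evaluation.
Variables (R : numFieldType) (s : R).
Hypothesis s_sqr : s * s = 3.

Definition qs_eval (x : Qsqrt3) : R := Q2R R x.1 + Q2R R x.2 * s.

Lemma qs_eval_of_Q q : qs_eval (qs_of_Q q) = Q2R R q.
Proof. by rewrite /qs_eval Q2R_int mul0r addr0. Qed.

Lemma qs_eval_zero : qs_eval qs_zero = 0.
Proof. by rewrite qs_eval_of_Q Q2R_int. Qed.

Lemma qs_eval_one : qs_eval qs_one = 1.
Proof. by rewrite qs_eval_of_Q Q2R_int. Qed.

Lemma qs_eval_two : qs_eval qs_two = 2.
Proof. by rewrite qs_eval_of_Q Q2R_int. Qed.

Lemma qs_eval_half : qs_eval qs_half = 2^-1.
Proof. by rewrite qs_eval_of_Q /Q2R mul1r. Qed.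

Lemma qs_eval_sqrt3_div6 : qs_eval qs_sqrt3_div6 = s / 6.
Proof. by rewrite /qs_eval /Q2R mul0r add0r mul1r mulrC. Qed.

(* cbn rather than simpl: simpl would also unfold Qred. *)
Lemma qs_eval_add x y : qs_eval (qs_add x y) = qs_eval x + qs_eval y.
Proof.
by rewrite /qs_eval /qs_add; cbn [fst snd]; rewrite !Q2R_red !Q2R_plus mulrDl addrACA.
Qed.

Lemma qs_eval_opp x : qs_eval (qs_opp x) = - qs_eval x.
Proof. by rewrite /qs_eval /qs_opp; cbn [fst snd]; rewrite !Q2R_opp mulNr opprD. Qed.

Lemma qs_eval_sub x y : qs_eval (qs_sub x y) = qs_eval x - qs_eval y.
Proof. by rewrite qs_eval_add qs_eval_opp. Qed.

Lemma qs_eval_mul x y : qs_eval (qs_mul x y) = qs_eval x * qs_eval y.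
Proof.
have Q2R3 : Q2R R 3 = s * s by rewrite s_sqr; exact: divr1.
rewrite /qs_eval /qs_mul; cbn [fst snd].
by rewrite !Q2R_red !Q2R_plus !Q2R_mult Q2R3; ring.
Qed.

Lemma qs_eval_eqb x y : qs_eqb x y -> qs_eval x = qs_eval y.
Proof. by rewrite /qs_eval => /andP[/Qeq_bool_iff/Q2R_Qeq-> /Qeq_bool_iff/Q2R_Qeq->]. Qed.

Lemma qs_eval_sum n f : qs_eval (qs_sum n f) = \sum_(i < n) qs_eval (f i).
Proof.
elim: n => [|n IHn]; first by rewrite big_ord0 qs_eval_zero.
by rewrite big_ord_recr /= qs_eval_add IHn.
Qed.

Definition qmx_eval m n (a : qmx) : 'M[R]_(m, n) := \matrix_(r, c) qs_eval (a r c).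

Lemma qmx_evalD m n a b : qmx_eval m n (qmx_add a b) = qmx_eval m n a + qmx_eval m n b.
Proof. by apply/matrixP => r c; rewrite !mxE qs_eval_add. Qed.

Lemma qmx_evalB m n a b : qmx_eval m n (qmx_sub a b) = qmx_eval m n a - qmx_eval m n b.
Proof. by apply/matrixP => r c; rewrite !mxE qs_eval_sub. Qed.

Lemma qmx_evalZ m n x a : qmx_eval m n (qmx_scale x a) = qs_eval x *: qmx_eval m n a.
Proof. by apply/matrixP => r c; rewrite !mxE qs_eval_mul. Qed.

Lemma qmx_evalM m n p a b :
  qmx_eval m p (qmx_mul n a b) = qmx_eval m n a *m qmx_eval n p b.
Proof.
apply/matrixP => r c; rewrite !mxE qs_eval_sum.
by apply: eq_bigr => k _; rewrite qs_eval_mul !mxE.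
Qed.

Lemma qmx_eval_comm n a b :
  qmx_eval n n (qmx_comm n a b)
  = qmx_eval n n a *m qmx_eval n n b - qmx_eval n n b *m qmx_eval n n a.
Proof. by rewrite qmx_evalB !qmx_evalM. Qed.

Lemma qmx_eval_memo m p n a : (m <= n)%N -> (p <= n)%N ->
  qmx_eval m p (qmx_memo n a) = qmx_eval m p a.
Proof.
move=> le_mn le_pn; apply/matrixP => r c; rewrite !mxE /qmx_memo !memoE //.
  exact: leq_trans (ltn_ord c) le_pn.
exact: leq_trans (ltn_ord r) le_mn.
Qed.

Lemma qmx_eval_table m p n f i : (i < n)%N -> (m <= n)%N -> (p <= n)%N ->
  qmx_eval m p (qmx_table n f i) = qmx_eval m p (f i).
Proof. by move=> lt_in le_mn le_pn; rewrite /qmx_table memoE // qmx_eval_memo. Qed.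

End Evaluation.

Definition qE (i j : nat) : qmx := fun r c =>
  if (r == i) && (c == j) then qs_opp qs_one
  else if (r == j) && (c == i) then qs_one else qs_zero.

Definition qX (n : nat) : qmx :=
  match n with
  | 0%N => qmx_scale qs_half (qmx_add (qE 4 5) (qE 6 7))
  | 1%N => qmx_scale qs_half (qmx_sub (qE 4 6) (qE 5 7))
  | 2%N => qmx_scale qs_half (qmx_add (qE 4 7) (qE 5 6))
  | 3%N => qmx_scale (qs_opp qs_sqrt3_div6)
             (qmx_add (qmx_sub (qmx_scale qs_two (qE 2 3)) (qE 4 5)) (qE 6 7))
  | 4%N => qmx_scale qs_sqrt3_div6
             (qmx_add (qmx_add (qmx_scale qs_two (qE 1 3)) (qE 4 6)) (qE 5 7))
  | 5%N => qmx_scale (qs_opp qs_sqrt3_div6)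
             (qmx_add (qmx_sub (qmx_scale qs_two (qE 1 2)) (qE 4 7)) (qE 5 6))
  | 6%N => qmx_scale (qs_opp qs_half) (qmx_sub (qE 1 7) (qE 2 4))
  | 7%N => qmx_scale qs_half (qmx_add (qE 1 6) (qE 2 5))
  | 8%N => qmx_scale (qs_opp qs_half) (qmx_sub (qE 1 5) (qE 2 6))
  | 9%N => qmx_scale qs_half (qmx_add (qE 1 4) (qE 2 7))
  | 10%N => qmx_scale qs_sqrt3_div6
              (qmx_add (qmx_sub (qE 1 6) (qE 2 5)) (qmx_scale qs_two (qE 3 4)))
  | 11%N => qmx_scale qs_sqrt3_div6
              (qmx_add (qmx_add (qE 1 7) (qE 2 4)) (qmx_scale qs_two (qE 3 5)))
  | 12%N => qmx_scale (qs_opp qs_sqrt3_div6)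
              (qmx_sub (qmx_sub (qE 1 4) (qE 2 7)) (qmx_scale qs_two (qE 3 6)))
  | _ => qmx_scale (qs_opp qs_sqrt3_div6)
           (qmx_sub (qmx_add (qE 1 5) (qE 2 6)) (qmx_scale qs_two (qE 3 7)))
  end.

(* (u0, v0) = ((e_4, e_5), (e_6, e_7)) in (O x O)^2, so g only sees the
   columns 4, ..., 7 of the matrices. *)
Definition qgram (i : nat) : Qsqrt3 :=
  qs_of_Q (if (i < 3)%N then Qmake 1 1 else if (i < 6)%N then Qmake 1 3 else Qmake 1 2).
Definition qgram_inv (i : nat) : Qsqrt3 :=
  qs_of_Q (if (i < 3)%N then Qmake 1 1 else if (i < 6)%N then Qmake 3 1 else Qmake 2 1).
Definition qric_val (i : nat) : Qsqrt3 :=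
  qs_of_Q (if (i < 3)%N then Qmake 5 2 else if (i < 6)%N then Qmake 29 54 else Qmake 5 6).

Definition qcoldot (a b : qmx) (c : nat) : Qsqrt3 :=
  qs_sum 8 (fun r => qs_mul (a r c) (b r c)).
Definition qmetric (a b : qmx) : Qsqrt3 :=
  qs_add (qs_add (qs_add (qcoldot a b 4) (qcoldot a b 5)) (qcoldot a b 6)) (qcoldot a b 7).

Definition qbracket (X : nat -> qmx) : nat -> nat -> qmx :=
  memo (fun _ _ _ => qs_zero) 14
    (fun i => memo (fun _ _ => qs_zero) 14 (fun j => qmx_memo 8 (qmx_comm 8 (X i) (X j)))).
Definition qbracket_metric (X : nat -> qmx) (B : nat -> nat -> qmx) : qtensor :=
  qmx_table 14 (fun i j l => qmetric (B i j) (X l)).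
Definition qkoszul (T : qtensor) (i j l : nat) : Qsqrt3 :=
  qs_mul qs_half (qs_add (qs_sub (T i j l) (T j l i)) (T l i j)).
Definition qchristoffel (T : qtensor) : qtensor :=
  qmx_table 14 (fun i j k => qs_mul (qgram_inv k) (qkoszul T i j k)).
Definition qstructure (T : qtensor) : qtensor :=
  qmx_table 14 (fun i j k => qs_mul (qgram_inv k) (T i j k)).
Definition qriemann (G C : qtensor) (a b c m : nat) : Qsqrt3 :=
  qs_sub
    (qs_sum 14 (fun k => qs_sub (qs_mul (G b c k) (G a k m)) (qs_mul (G a c k) (G b k m))))
    (qs_sum 14 (fun k => qs_mul (C a b k) (G k c m))).
Definition qricci (G C : qtensor) (b c : nat) : Qsqrt3 :=
  qs_sum 14 (fun a => qriemann G C a b c a).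

Definition gram_table_ok (X : nat -> qmx) : bool :=
  all (fun i => qs_eqb (qs_mul (qgram i) (qgram_inv i)) qs_one &&
     all (fun j => qs_eqb (qmetric (X i) (X j)) (if i == j then qgram i else qs_zero))
       (iota 0 14)) (iota 0 14).

Definition ricci_table_ok (G C : qtensor) : bool :=
  all (fun b => all (fun c =>
     qs_eqb (qricci G C b c) (if b == c then qric_val b else qs_zero))
       (iota 0 14)) (iota 0 14).

Lemma gram_table_ok_qX : gram_table_ok (qmx_table 14 qX).
Proof. by vm_compute. Qed.

Lemma ricci_table_ok_qX :
  let X := qmx_table 14 qX in let T := qbracket_metric X (qbracket X) in
  ricci_table_ok (qchristoffel T) (qstructure T).
Proof. by vm_compute. Qed.

Lemma all_iota_ord n (p : nat -> bool) : all p (iota 0 n) -> forall i : 'I_n, p i.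
Proof. by move=> /allP p_iota i; apply: p_iota; rewrite mem_iota add0n ltn_ord. Qed.

Lemma gram_table_ok_entries X (i j : 'I_14) : gram_table_ok X ->
  qs_eqb (qs_mul (qgram i) (qgram_inv i)) qs_one
  /\ qs_eqb (qmetric (X i) (X j)) (if i == j :> nat then qgram i else qs_zero).
Proof. by rewrite /gram_table_ok => /all_iota_ord/(_ i)/andP[-> /all_iota_ord/(_ j)]. Qed.

Lemma ricci_table_ok_entries G C (b c : 'I_14) : ricci_table_ok G C ->
  qs_eqb (qricci G C b c) (if b == c :> nat then qric_val b else qs_zero).
Proof. by rewrite /ricci_table_ok => /all_iota_ord/(_ b)/all_iota_ord/(_ c). Qed.

Lemma invmx_diag (F : comUnitRingType) n (d e : 'rV[F]_n) :
  (forall i, d 0 i * e 0 i = 1) -> invmx (diag_mx d) = diag_mx e.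
Proof.
move=> de1; have de : diag_mx d *m diag_mx e = 1%:M.
  by rewrite mulmx_diag -diag_const_mx; congr diag_mx; apply/rowP => i; rewrite !mxE de1.
have [d_unit _] := mulmx1_unit de.
by rewrite -[LHS]mulmx1 -de mulKmx.
Qed.

Lemma sum_diag_mx_mul (F : pzRingType) n (d : 'rV[F]_n) k (G : 'I_n -> F) :
  \sum_l diag_mx d k l * G l = d 0 k * G k.
Proof.
rewrite (bigD1 k) //= mxE eqxx mulr1n big1 ?addr0 // => l.
by rewrite mxE eq_sym => /negPf ->; rewrite mulr0n mul0r.
Qed.

Lemma diag_mx_form_gt0 (F : realDomainType) n (d v : 'rV[F]_n) :
  (forall i, 0 < d 0 i) -> v != 0 -> 0 < (v *m diag_mx d *m v^T) 0 0.
Proof.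
move=> d_gt0 /rV0Pn[i vi_neq0].
have -> : (v *m diag_mx d *m v^T) 0 0 = \sum_j d 0 j * v 0 j ^+ 2.
  rewrite mul_mx_diag mxE; apply: eq_bigr => j _.
  by rewrite !mxE mulrAC mulrC expr2.
rewrite (bigD1 i) //=; apply: ltr_wpDr.
  by apply: sumr_ge0 => j _; rewrite mulr_ge0 ?sqr_ge0 ?ltW.
by rewrite mulr_gt0 // exprn_even_gt0 // vi_neq0 orbT.
Qed.

Section Transfer.
Variable R : rcfType.
Local Notation eval := (qs_eval (s3 R)).
Local Notation evalmx := (qmx_eval (s3 R) 8 8).
Local Notation qXt := (qmx_table 14 qX).
Local Notation qT := (qbracket_metric qXt (qbracket qXt)).

Lemma s3_sqr : s3 R * s3 R = 3.
Proof. by rewrite -expr2 sqr_sqrtr // ler0n. Qed.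

Lemma qmx_eval_E i j : evalmx (qE i j) = Emx R i j.
Proof.
apply/matrixP => r c; rewrite !mxE /qE.
case: ifP => _; first by rewrite qs_eval_opp qs_eval_one.
by case: ifP => _; rewrite ?qs_eval_one ?qs_eval_zero.
Qed.

Lemma Xn_eval n : Xn R n = evalmx (qX n).
Proof.
pose evalE := (qmx_evalD, qmx_evalB, qmx_evalZ s3_sqr, qmx_eval_E,
               qs_eval_opp, qs_eval_half, qs_eval_two, qs_eval_sqrt3_div6).
by do 13 (case: n => [|n]; first by rewrite [qX _]/= [Xn _ _]/= !evalE);
  rewrite [qX _]/= [Xn _ _]/= !evalE.
Qed.

Lemma Xg_eval (i : 'I_14) : Xg R i = evalmx (qXt i).
Proof. by rewrite qmx_eval_table // -Xn_eval. Qed.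

Lemma sed_e_pair (i j : 'I_8) :
  sed_e R i + sed_e R (8 + j) = col_mx (delta_mx i 0) (delta_mx j 0).
Proof.
apply/matrixP => r c; rewrite (ord1 c) !mxE.
case: splitP => k ->; rewrite !mxE /= ?eqn_add2l andbT.
  rewrite (ltn_eqF (ltn_addr j (ltn_ord k))) addr0.
  by rewrite -[k == i :> nat]/(k == i); case: (k == i).
rewrite (gtn_eqF (ltn_addr k (ltn_ord i))) add0r.
by rewrite -[k == j :> nat]/(k == j); case: (k == j).
Qed.

Lemma ip_col_mx m n (a c : 'cV[R]_m) (b d : 'cV[R]_n) :
  ip (col_mx a b) (col_mx c d) = ip a c + ip b d.
Proof.
by rewrite /ip big_split_ord; congr (_ + _); apply: eq_bigr => r _;
  rewrite ?col_mxEu ?col_mxEd.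
Qed.

Lemma actS_col_mx A (a b : 'cV[R]_8) : actS A (col_mx a b) = col_mx (A *m a) (A *m b).
Proof. by rewrite /actS col_mxKu col_mxKd. Qed.

Lemma qcoldot_eval a b (k : 'I_8) :
  eval (qcoldot a b k) = ip (evalmx a *m delta_mx k 0) (evalmx b *m delta_mx k 0).
Proof.
rewrite qs_eval_sum /ip; apply: eq_bigr => r _.
by rewrite (qs_eval_mul s3_sqr) -!colE !mxE.
Qed.

Lemma gm_eval a b : gm (evalmx a) (evalmx b) = eval (qmetric a b).
Proof.
rewrite /gm /u0 /v0 (sed_e_pair (@Ordinal 8 4 isT) (@Ordinal 8 5 isT)).
rewrite (sed_e_pair (@Ordinal 8 6 isT) (@Ordinal 8 7 isT)) !actS_col_mx !ip_col_mx.
by rewrite -!qcoldot_eval /qmetric !qs_eval_add addrA.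
Qed.

Lemma Gram_diag : Gram R = diag_mx (\row_i eval (qgram i)).
Proof.
apply/matrixP => i j; rewrite !mxE !Xg_eval gm_eval.
have [_ /qs_eval_eqb->] := gram_table_ok_entries i j gram_table_ok_qX.
rewrite -[i == j :> nat]/(i == j).
by case: eqVneq => [->|_]; rewrite ?mulr1n ?mulr0n ?qs_eval_zero.
Qed.

Lemma Gram_inv_diag : Gram_inv R = diag_mx (\row_i eval (qgram_inv i)).
Proof.
rewrite /Gram_inv Gram_diag; apply: invmx_diag => i; rewrite !mxE.
have [/(qs_eval_eqb (s3 R)) qgram_inv_ok _] := gram_table_ok_entries i i gram_table_ok_qX.
by rewrite -(qs_eval_mul s3_sqr) qgram_inv_ok qs_eval_one.
Qed.

Lemma bracket_metric_eval (i j l : 'I_14) :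
  gm (br (Xg R i) (Xg R j)) (Xg R l) = eval (qT i j l).
Proof.
rewrite /qbracket_metric qmx_tableE // /qbracket !memoE // -gm_eval qmx_eval_memo //.
by rewrite (qmx_eval_comm s3_sqr) !Xg_eval.
Qed.

Lemma Gamma_eval i j k : Gamma R i j k = eval (qchristoffel qT i j k).
Proof.
rewrite /Gamma Gram_inv_diag sum_diag_mx_mul mxE /qchristoffel qmx_tableE //.
rewrite !(qs_eval_mul s3_sqr) qs_eval_half qs_eval_add qs_eval_sub.
by rewrite /koszul !bracket_metric_eval.
Qed.

Lemma cst_eval i j k : cst R i j k = eval (qstructure qT i j k).
Proof.
rewrite /cst /Defs.coord Gram_inv_diag sum_diag_mx_mul mxE /qstructure qmx_tableE //.
by rewrite (qs_eval_mul s3_sqr) bracket_metric_eval.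
Qed.

Lemma Ric_eval b c : Ric R b c = eval (qricci (qchristoffel qT) (qstructure qT) b c).
Proof.
rewrite /Ric qs_eval_sum; apply: eq_bigr => a _.
rewrite /Rcoef qs_eval_sub !qs_eval_sum; congr (_ - _); apply: eq_bigr => k _.
  by rewrite qs_eval_sub !(qs_eval_mul s3_sqr) !Gamma_eval.
by rewrite (qs_eval_mul s3_sqr) Gamma_eval cst_eval.
Qed.

Lemma qric_val_eval (i : 'I_14) : eval (qric_val i) = ric_val R i.
Proof.
by rewrite qs_eval_of_Q /qric_val /ric_val; case: ifP => _; [|case: ifP => _].
Qed.

Lemma ric_val_gt0 (i : 'I_14) : 0 < ric_val R i.
Proof. by rewrite /ric_val; case: ifP => _; [|case: ifP => _]; rewrite divr_gt0. Qed.

Lemma RicM_diag : RicM R = diag_mx (\row_i ric_val R i).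
Proof.
apply/matrixP => b c; rewrite !mxE Ric_eval.
rewrite (qs_eval_eqb _ (ricci_table_ok_entries b c ricci_table_ok_qX)).
rewrite -[b == c :> nat]/(b == c).
by case: eqVneq => [->|_]; rewrite ?mulr1n ?mulr0n ?qric_val_eval ?qs_eval_zero.
Qed.

End Transfer.

Theorem mainTheorem2 (R : rcfType) :
  (forall v : 'rV[R]_14, v != 0 -> 0 < (v *m RicM R *m v^T) 0 0)
  /\ RicM R = diag_mx (\row_(i < 14) ric_val R i).
Proof.
split; last exact: RicM_diag.
move=> v v_neq0; rewrite RicM_diag; apply: diag_mx_form_gt0 => // i.
by rewrite mxE ric_val_gt0.
Qed.
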